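(* Let $E$ be a compact subset of a bounded open set $O\subset\mathbb{R}^n$ and let $1<p<q<+\infty$. Then $$\mathrm{cap}^{\inf}_\varphi(E;O)\ge c(p,q)\min\Big\{\mathrm{cap}_p(E;O),\ |O|\Big(\frac{\mathrm{cap}_p(E;O)}{|O|}\Big)^{\frac qp}\Big\}.$$
   Context: $a\colon\mathbb{R}^n\to[0,\infty)$ is $\alpha$-Hölder continuous ($\alpha\in(0,1]$), $\varphi(x,t)=t^p+a(x)t^q$. For open $O$, $\varphi_O^-(t)=t^p+(\inf_Oa)t^q$. Level-$t$-capacity: $\mathrm{cap}^t_\varphi(E;O)=\inf\{\int_O\frac{\varphi(x,|\nabla u|)}{\varphi_O^-(t)}dx: u\in\mathrm{Lip}(\overline O), u\ge t\chi_E, u|_{\partial O}=0\}$; $\mathrm{cap}^{\inf}_\varphi=\inf_{t>0}\mathrm{cap}^t_\varphi$. $\mathrm{cap}_p(E;O)=\inf\{\int_O|\nabla u|^p: u\in\mathrm{Lip}(\overline O), u\ge\chi_E, u|_{\partial O}=0\}$. The constant $c(p,q)>0$ depends only on $p,q$. *)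

(* R^n is modelled as 'rV[R]_n. *)
From HB Require Import structures.
From mathcomp Require Import all_boot all_order all_algebra.
From mathcomp Require Import all_classical all_reals all_analysis.
Set Implicit Arguments. Unset Strict Implicit. Unset Printing Implicit Defensive.
Import Order.TTheory GRing.Theory Num.Theory.
Import numFieldNormedType.Exports.
Local Open Scope classical_set_scope.
Local Open Scope ring_scope.

Section Defs.
Variable R : realType.

Definition enorm n (v : 'rV[R]_n) : R := Num.sqrt (\sum_(i < n) v 0 i ^+ 2).

(* Lebesgue integral over R^n of a nonnegative extended-real function,
   as the iterated one-dimensional Lebesgue integral (Tonelli). *)
Fixpoint iint (n : nat) : ('rV[R]_n -> \bar R) -> \bar R :=
  match n return ('rV[R]_n -> \bar R) -> \bar R with
  | 0 => fun f => f 0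
  | m.+1 => fun f =>
      (\int[@lebesgue_measure R]_(t in [set: R])
          iint (fun y : 'rV[R]_m => f (row_mx (\row_(j < 1) t) y)))%E
  end.

Definition lebn n (A : set 'rV[R]_n) : \bar R := iint (fun x => (\1_A x)%:E).

(* classical gradient (where u is differentiable; 0 elsewhere) *)
Definition grad n (u : 'rV[R]_n -> R) (x : 'rV[R]_n) : 'rV[R]_n :=
  if `[< differentiable u x >] then \row_(i < n) ('d u x (delta_mx 0 i : 'rV[R]_n))
  else 0.

Definition lipschitz_on n (A : set 'rV[R]_n) (u : 'rV[R]_n -> R) : Prop :=
  exists L : R, forall x y, A x -> A y -> `|u x - u y| <= L * enorm (x - y).

Definition admissible n (O E : set 'rV[R]_n) (t : R) (u : 'rV[R]_n -> R) : Prop :=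
  [/\ lipschitz_on (closure O) u,
      (forall x, closure O x -> 0 <= u x),
      (forall x, E x -> t <= u x) &
      (forall x, closure O x -> ~ O x -> u x = 0)].

Definition phi n (p q : R) (a : 'rV[R]_n -> R) (x : 'rV[R]_n) (s : R) : R :=
  s `^ p + a x * s `^ q.

Definition phi_minus n (p q : R) (a : 'rV[R]_n -> R) (O : set 'rV[R]_n) (s : R) : R :=
  s `^ p + inf (a @` O) * s `^ q.

Definition energy n (O : set 'rV[R]_n) (F : 'rV[R]_n -> R -> R) (u : 'rV[R]_n -> R)
  : \bar R :=
  iint (fun x => if `[< O x >] then (F x (enorm (grad u x)))%:E else 0%E).

Definition cap_t n (p q : R) (a : 'rV[R]_n -> R) (t : R) (E O : set 'rV[R]_n) : \bar R :=
  ereal_inf [set (energy O (phi p q a) u * ((phi_minus p q a O t)^-1)%:E)%E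
            | u in admissible O E t].

Definition cap_inf n (p q : R) (a : 'rV[R]_n -> R) (E O : set 'rV[R]_n) : \bar R :=
  ereal_inf [set cap_t p q a t E O | t in [set t : R | 0 < t]].

Definition cap_p n (p : R) (E O : set 'rV[R]_n) : \bar R :=
  ereal_inf [set energy O (fun _ s => s `^ p) u | u in admissible O E 1].

Definition holder_continuous n (alpha : R) (a : 'rV[R]_n -> R) : Prop :=
  exists L : R, forall x y, `|a x - a y| <= L * (enorm (x - y)) `^ alpha.

End Defs.

(* With [A = inf_O a], the phi-energy of a test function [u] admissible at level
   [t] is at least [P + A Q], where [P] and [Q] are the integrals over [O] of
   [|grad u|^p] and [|grad u|^q].  As [u / t] is admissible for [cap_p],
   [P >= t^p cap_p]; integrating Young's inequality
   [r b y <= y^r + (r - 1) b^(r/(r-1))] with [r = q/p] and optimising in [b] gives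
   Jensen's inequality [Q >= |O| (P/|O|)^(q/p)].  Hence the energy is at least
   [min (cap_p, |O| (cap_p/|O|)^(q/p)) phi_O^-(t)], so that c = 1 works.
   Integrals over R^n are iterated inner Lebesgue integrals, so integrating the
   constant term of Young's inequality needs [t |-> |slice of an open set at t|]
   to be measurable.  It is lower semicontinuous; this is proved by induction on
   the dimension, together with continuity from below of the measure along
   increasing sequences of open sets. *)

From HB Require Import structures.
From mathcomp Require Import all_boot all_order all_algebra.
From mathcomp Require Import all_classical all_reals all_analysis.
From mathcomp Require Import measurable_realfun.
From mathcomp Require Import ring.
Import Order.TTheory GRing.Theory Num.Theory.
Import numFieldNormedType.Exports.
Import HBNNSimple.
Set Implicit Arguments. Unset Strict Implicit.

Local Open Scope classical_set_scope.
Local Open Scope ring_scope.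

(* No measurability is assumed below: for nonnegative [f], [\int[mu]_x f x] is
   the supremum of the integrals of the simple functions under [f]. *)
Section inner_integral.
Variable R : realType.
Local Open Scope ereal_scope.
Local Notation mu := (@lebesgue_measure R).

Lemma ereal_supDr_le (S : set (\bar R)) (c B : \bar R) : 0 <= c -> S 0 ->
  (forall x, S x -> x + c <= B) -> ereal_sup S + c <= B.
Proof.
case: c => [r| |] // r0 S0 SB.
  by rewrite -leeBrDr //; apply: ge_ereal_sup => x Sx; rewrite leeBrDr //; exact: SB.
by have := SB 0 S0; rewrite add0e leye_eq => /eqP ->; exact: leey.
Qed.

Lemma measurable_EFin_nnsfun (h : {nnsfun measurableTypeR R >-> R}) :
  measurable_fun setT (fun x => (h x)%:E).
Proof. by apply/measurable_EFinP; exact: measurable_funPT. Qed.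

Lemma ge0_integralT_le_ub (f : R -> \bar R) (B : \bar R) : (forall x, 0 <= f x) ->
  (forall h : {nnsfun measurableTypeR R >-> R},
     (forall x, (h x)%:E <= f x) -> \int[mu]_x (h x)%:E <= B) ->
  \int[mu]_x f x <= B.
Proof.
move=> f0 hB; rewrite ge0_integralTE //; apply: ge_ereal_sup => _ [h hf <-].
by rewrite -integralT_nnsfun; exact: hB.
Qed.

Lemma ge0_le_integralT (f g : R -> \bar R) : (forall x, 0 <= f x) ->
  (forall x, f x <= g x) -> \int[mu]_x f x <= \int[mu]_x g x.
Proof.
move=> f0 fg; have g0 x : 0 <= g x by exact: le_trans (f0 x) (fg x).
rewrite !ge0_integralTE //; apply: ereal_sup_le => _ [h hf <-].
by exists h => //= x; exact: le_trans (hf x) (fg x).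
Qed.

Lemma ge0_integralD_ge (f g : R -> \bar R) : (forall x, 0 <= f x) -> (forall x, 0 <= g x) ->
  \int[mu]_x f x + \int[mu]_x g x <= \int[mu]_x (f x + g x).
Proof.
move=> f0 g0; rewrite [X in X + _]ge0_integralTE //.
apply: ereal_supDr_le; first exact: integral_ge0.
  by exists nnsfun0 => [x|]; rewrite ?sintegral0 //= lee_fin.
move=> _ [h1 h1f <-]; rewrite addeC [X in X + _]ge0_integralTE //.
apply: ereal_supDr_le; first exact: sintegral_ge0.
  by exists nnsfun0 => [x|]; rewrite ?sintegral0 //= lee_fin.
move=> _ [h2 h2g <-]; rewrite -!integralT_nnsfun -ge0_integralD //;
  try (by move=> x _; rewrite lee_fin); try exact: measurable_EFin_nnsfun.
apply: ge0_le_integralT => [x|x]; first by rewrite adde_ge0 // lee_fin.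
by rewrite addeC leeD.
Qed.

Lemma ge0_integralD_le (f g : R -> \bar R) : (forall x, 0 <= f x) -> (forall x, 0 <= g x) ->
  measurable_fun setT g ->
  \int[mu]_x (f x + g x) <= \int[mu]_x f x + \int[mu]_x g x.
Proof.
move=> f0 g0 mg; apply: ge0_integralT_le_ub => [x|h hfg]; first exact: adde_ge0.
(* Split a simple [h <= f + g] as [h <= k + g] with [k <= f]. *)
pose k x := maxe ((h x)%:E - g x) 0.
have mk : measurable_fun setT k.
  apply: measurable_maxe => //; apply: emeasurable_funB => //.
  exact: measurable_EFin_nnsfun.
have k0 x : 0 <= k x by rewrite /k le_max lexx orbT.
apply: (@le_trans _ _ (\int[mu]_x (k x + g x))).
  apply: ge0_le_integral => //.
  - by move=> x _; rewrite lee_fin.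
  - exact: measurable_EFin_nnsfun.
  - exact: emeasurable_funD.
  move=> x _; rewrite /k; move: (g0 x); case: (g x) => [r| |] // r0.
    by rewrite -leeBlDr // le_max lexx.
  by rewrite addey ?leey // gt_eqF // (lt_le_trans (ltNyr 0)) // le_max lexx orbT.
rewrite ge0_integralD //; apply: leeD2r; apply: ge0_le_integralT => // x.
rewrite /k ge_max f0 andbT.
move: (g0 x) (hfg x); case: (g x) => [r| |] // r0.
  by rewrite leeBlDr.
by move=> _; rewrite (_ : (h x)%:E - +oo = -oo) // leNye.
Qed.

Lemma ge0_integralZl_ge (f : R -> \bar R) (k : R) : (forall x, 0 <= f x) -> (0 <= k)%R ->
  k%:E * \int[mu]_x f x <= \int[mu]_x (k%:E * f x).
Proof.
move=> f0; rewrite le0r => /predU1P[->|k0].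
  by rewrite mul0e; apply: integral_ge0 => x _; rewrite mul0e.
suff : \int[mu]_x f x <= (k^-1)%:E * \int[mu]_x (k%:E * f x).
  rewrite -(lee_pmul2l (_ : k%:E \is a fin_num) (_ : 0 < k%:E)) //.
  by rewrite muleA -EFinM mulfV ?gt_eqF // mul1e.
apply: ge0_integralT_le_ub => // h hf.
have k_neq0 : k != 0%R by rewrite gt_eqF.
rewrite -[X in X <= _](mul1e) -(mulVf k_neq0) EFinM -muleA.
rewrite lee_pmul2l ?lte_fin ?invr_gt0 //.
rewrite -(ge0_integralZl _ _ (measurable_EFin_nnsfun h)) //;
  [|by move=> x _; rewrite lee_fin|by rewrite lee_fin ltW].
apply: ge0_le_integralT => x.
  by apply: mule_ge0; rewrite lee_fin // ltW.
by rewrite lee_pmul2l ?lte_fin.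
Qed.

End inner_integral.

Section iterated_integral.
Variable R : realType.
Local Open Scope ereal_scope.
Local Notation mu := (@lebesgue_measure R).

Definition cons_row n (t : R) (y : 'rV[R]_n) : 'rV[R]_n.+1 := row_mx (\row_(j < 1) t) y.

Definition slice n (U : set 'rV[R]_n.+1) (t : R) : set 'rV[R]_n := [set y | U (cons_row t y)].

Lemma iintS n (f : 'rV[R]_n.+1 -> \bar R) :
  iint f = \int[mu]_t iint (fun y : 'rV[R]_n => f (cons_row t y)).
Proof. by []. Qed.

Lemma lebnS n (U : set 'rV[R]_n.+1) : lebn U = \int[mu]_t lebn (slice U t).
Proof. by []. Qed.

Lemma iint_ge0 n (f : 'rV[R]_n -> \bar R) : (forall x, 0 <= f x) -> 0 <= iint f.
Proof.
elim: n f => [|n IH] f f0; first exact: f0.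
by rewrite iintS; apply: integral_ge0 => t _; apply: IH.
Qed.

Lemma le_iint n (f g : 'rV[R]_n -> \bar R) : (forall x, 0 <= f x) ->
  (forall x, f x <= g x) -> iint f <= iint g.
Proof.
elim: n f g => [|n IH] f g f0 fg; first exact: fg.
by rewrite !iintS; apply: ge0_le_integralT => t; [exact: iint_ge0 | exact: IH].
Qed.

Lemma iintD_ge n (f g : 'rV[R]_n -> \bar R) : (forall x, 0 <= f x) -> (forall x, 0 <= g x) ->
  iint f + iint g <= iint (fun x => f x + g x).
Proof.
elim: n f g => [|n IH] f g f0 g0; first exact: lexx.
rewrite !iintS; apply: le_trans (ge0_integralD_ge _ _) _; try by move=> t; exact: iint_ge0.
apply: ge0_le_integralT => t; last exact: IH.
by apply: adde_ge0; exact: iint_ge0.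
Qed.

Lemma iintZl_ge n (f : 'rV[R]_n -> \bar R) (k : R) : (forall x, 0 <= f x) -> (0 <= k)%R ->
  k%:E * iint f <= iint (fun x => k%:E * f x).
Proof.
elim: n f => [|n IH] f f0 k0; first exact: lexx.
rewrite !iintS; apply: le_trans (ge0_integralZl_ge _ k0) _; first by move=> t; exact: iint_ge0.
apply: ge0_le_integralT => t; last exact: IH.
by apply: mule_ge0; [rewrite lee_fin | exact: iint_ge0].
Qed.

Lemma lebn_ge0 n (A : set 'rV[R]_n) : 0 <= lebn A.
Proof. by apply: iint_ge0 => x; rewrite lee_fin. Qed.

Lemma le_lebn n (A B : set 'rV[R]_n) : A `<=` B -> lebn A <= lebn B.
Proof.
move=> AB; apply: le_iint => x; first by rewrite lee_fin.
rewrite lee_fin !indicE; have [xA|xA] := boolP (x \in A).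
  by rewrite (mem_set (AB _ (set_mem xA))).
by rewrite ler_nat.
Qed.

Lemma openP_ball (T : pseudoMetricType R) (A : set T) :
  open A <-> forall x, A x -> exists2 e : R, (0 < e)%R & ball x e `<=` A.
Proof.
rewrite openE; split=> [Ao x /Ao /nbhs_ballP[e e0 eA]|Ao x /Ao[e e0 eA]].
  by exists e.
by apply/nbhs_ballP; exists e.
Qed.

Lemma ball_cons_row n (t t' : R) (y y' : 'rV[R]_n) (e : R) : (0 < e)%R ->
  ball t e t' -> ball y e y' -> ball (cons_row t y) e (cons_row t' y').
Proof.
move=> e0 tt' yy'; split => // i j; rewrite /cons_row !mxE.
case: (@fintype.split 1 n j) => [j1|j2]; first by rewrite !mxE.
by case: yy' => _ /(_ i j2).
Qed.

Lemma open_slice n (U : set 'rV[R]_n.+1) t : open U -> open (slice U t).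
Proof.
move=> /openP_ball oU; apply/openP_ball => y /oU[e e0 eU].
by exists e => // y' yy'; apply: eU; apply: ball_cons_row => //; exact: ballxx.
Qed.

Definition lebn_continuous_from_below n := forall V : nat -> set 'rV[R]_n,
  (forall k, open (V k)) -> {homo V : k l / (k <= l)%N >-> k `<=` l} ->
  forall a : \bar R, a < lebn (\bigcup_k V k) -> exists k, a < lebn (V k).

Definition slice_lebn_measurable n := forall U : set 'rV[R]_n.+1, open U ->
  measurable_fun setT (fun t : R => lebn (slice U t)).

Lemma lebn_continuous_from_below0 : lebn_continuous_from_below 0.
Proof.
move=> V _ _ a; set o : 'rV[R]_0 := 0%R.
have lebn0 (A : set 'rV[R]_0) : lebn A = (\1_A o : R)%:E by [].
have [[k _ Vk]|VN] := pselect ((\bigcup_k V k) o).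
  rewrite !lebn0 indicE mem_set; last by exists k.
  by move=> a1; exists k; rewrite lebn0 indicE mem_set.
by rewrite lebn0 indicE memNset // => a0; exists 0%N; exact: lt_le_trans a0 (lebn_ge0 _).
Qed.

(* With [V k] the points [y] such that [U] contains a ball of radius > 1/(k+1)
   around [(t, y)], [slice U t'] contains [V k] for [t'] close to [t]: the slice
   measure is lower semicontinuous. *)
Lemma slice_lebn_measurable_of_approx n :
  lebn_continuous_from_below n -> slice_lebn_measurable n.
Proof.
move=> approx U oU; apply: lower_semicontinuous_measurable => t a alt.
pose V k := [set y : 'rV[R]_n |
  exists2 rho : R, (k.+1%:R^-1 < rho)%R & ball (cons_row t y) rho `<=` U].
have rho_gt0 k (rho : R) : (k.+1%:R^-1 < rho)%R -> (0 < rho)%R.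
  by apply: lt_trans; rewrite invr_gt0.
have oV k : open (V k).
  apply/openP_ball => y [rho krho yU].
  set rho' := ((k.+1%:R^-1 + rho) / 2)%R; have [krho' rho'rho] := midf_lt krho.
  exists (rho - rho')%R; first by rewrite subr_gt0.
  move=> y' yy'; exists rho' => // z zb; apply: yU.
  rewrite -(subrK rho' rho); apply: ball_triangle zb.
  by apply: ball_cons_row => //; [rewrite subr_gt0 | apply: ballxx; rewrite subr_gt0].
have ndV : {homo V : k l / (k <= l)%N >-> k `<=` l}.
  move=> k l kl y [rho krho yU]; exists rho => //; apply: le_lt_trans krho.
  by rewrite lef_pV2 ?posrE // ler_nat ltnS.
have sliceE : slice U t = \bigcup_k V k.
  apply/seteqP; split => y.
    move: oU => /openP_ball oU /oU[e e0 eU].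
    have [N _ /(_ N (leqnn N)) Ne] := near_infty_natSinv_lt (PosNum e0).
    by exists N => //; exists e.
  by move=> [k _ [rho krho yU]]; apply: yU; apply: ballxx; exact: rho_gt0 krho.
rewrite sliceE in alt; have [k ak] := approx _ oV ndV _ alt.
exists (ball t (k.+1%:R^-1)%R).
  by apply/nbhs_ballP; exists (k.+1%:R^-1)%R => //=; rewrite invr_gt0.
move=> t' tt'; apply: lt_le_trans ak _; apply: le_lebn => y [rho krho yU].
apply: yU; apply: ball_cons_row; first exact: rho_gt0 krho.
  exact: le_ball (ltW krho) _ tt'.
by apply: ballxx; exact: rho_gt0 krho.
Qed.

Lemma lebn_continuous_from_belowS n : lebn_continuous_from_below n ->
  slice_lebn_measurable n -> lebn_continuous_from_below n.+1.
Proof.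
move=> approx mslice V oV ndV a; rewrite lebnS => alt.
pose w k t := lebn (slice (V k) t).
have mw k : measurable_fun setT (w k) := mslice _ (oV k).
have ndw t : {homo (fun k => w k t) : k l / (k <= l)%N >-> k <= l}.
  by move=> k l kl; apply: le_lebn => y; exact: ndV.
have limw t : lebn (slice (\bigcup_k V k) t) = limn (fun k => w k t).
  rewrite (cvg_lim _ (ereal_nondecreasing_cvgn (ndw t))) //.
  apply/eqP; rewrite eq_le; apply/andP; split.
    rewrite leNgt; apply/negP => /(approx _ (fun k => open_slice (t:=t) (oV k))
      (fun k l kl y => ndV k l kl _)) [k]; apply/negP; rewrite -leNgt.
    by apply: ereal_sup_ubound; exists k.
  by apply: ge_ereal_sup => _ [k _ <-]; apply: le_lebn => y Vy; exists k.
have int_limw : \int[mu]_t lebn (slice (\bigcup_k V k) t) = \int[mu]_t limn (fun k => w k t).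
  by apply: eq_integral => t _; exact: limw.
rewrite int_limw monotone_convergence // in alt; last first.
  by move=> k t _; exact: lebn_ge0.
have ndI : {homo (fun k => \int[mu]_t w k t) : k l / (k <= l)%N >-> k <= l}.
  by move=> k l kl; apply: ge0_le_integralT => t; [exact: lebn_ge0 | exact: ndw].
rewrite (cvg_lim _ (ereal_nondecreasing_cvgn ndI)) // in alt.
by have [_ [k _ <-] ak] := ereal_sup_gt alt; exists k; rewrite lebnS.
Qed.

Lemma lebn_open_regular n : lebn_continuous_from_below n /\ slice_lebn_measurable n.
Proof.
elim: n => [|n [approx _]].
  by split; [|apply: slice_lebn_measurable_of_approx]; exact: lebn_continuous_from_below0.
have approxS := lebn_continuous_from_belowS approx (slice_lebn_measurable_of_approx approx).
by split => //; exact: slice_lebn_measurable_of_approx.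
Qed.

Lemma iintD_indic_le n (O : set 'rV[R]_n) (f : 'rV[R]_n -> \bar R) (k : R) : open O ->
  (forall x, 0 <= f x) -> (0 <= k)%R ->
  iint (fun x => f x + k%:E * (\1_O x : R)%:E) <= iint f + k%:E * lebn O.
Proof.
elim: n O f => [|n IH] O f oO f0 k0; first exact: lexx.
have ke : 0 <= k%:E by rewrite lee_fin.
rewrite !iintS lebnS.
apply: (@le_trans _ _
  (\int[mu]_t (iint (fun y => f (cons_row t y)) + k%:E * lebn (slice O t)))).
  apply: ge0_le_integralT => t; last exact: IH (open_slice (t:=t) oO) _ k0.
  by apply: iint_ge0 => y; apply: adde_ge0 => //; apply: mule_ge0; rewrite ?lee_fin.
have mslice : measurable_fun setT (fun t => lebn (slice O t)).
  exact: (lebn_open_regular n).2.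
rewrite -ge0_integralZl //; last by move=> t _; exact: lebn_ge0.
apply: ge0_integralD_le => [t|t|]; first exact: iint_ge0.
  by apply: mule_ge0 => //; exact: lebn_ge0.
exact: measurable_funeM.
Qed.

End iterated_integral.

Section young.
Variable R : realType.

Lemma young_powR (r b y : R) : 1 < r -> 0 <= b -> 0 <= y ->
  r * b * y <= y `^ r + (r - 1) * b `^ (r / (r - 1)).
Proof.
move=> r1 b0 y0; have r0 : 0 < r by apply: lt_trans r1.
have r10 : 0 < r - 1 by rewrite subr_gt0.
have := @conjugate_powR R y b r (r / (r - 1)) y0 b0 r0 (divr_gt0 r0 r10).
have -> : r^-1 + (r / (r - 1))^-1 = 1 by field; rewrite ?gt_eqF.
have -> : y `^ r + (r - 1) * b `^ (r / (r - 1)) =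
    r * (y `^ r / r + b `^ (r / (r - 1)) / (r / (r - 1))).
  by field; rewrite ?gt_eqF.
by move=> /(_ erefl) yb; rewrite -mulrA [b * y]mulrC ler_wpM2l // ltW.
Qed.

(* Take [b = (P / l) ^ (r - 1)], for which Young's inequality is an equality. *)
Lemma mean_powR_le_of_young (r l P Q : R) : 1 < r -> 0 < l -> 0 <= P ->
  (forall b, 0 <= b -> r * b * P <= Q + (r - 1) * b `^ (r / (r - 1)) * l) ->
  l * (P / l) `^ r <= Q.
Proof.
move=> r1 l0 P0; set x := P / l.
have r0 : 0 < r by apply: lt_trans r1.
have x0 : 0 <= x by rewrite divr_ge0 // ltW.
have Pxl : P = x * l by rewrite divfK ?gt_eqF.
move=> /(_ (x `^ (r - 1)) (powR_ge0 _ _)).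
rewrite -powRrM (_ : (r - 1) * (r / (r - 1)) = r); last by field; rewrite subr_eq0 gt_eqF.
rewrite Pxl (_ : r * x `^ (r - 1) * (x * l) = r * (x * x `^ (r - 1)) * l); last by ring.
rewrite mulr_powRB1 // (_ : r * x `^ r * l = x `^ r * l + (r - 1) * x `^ r * l); last by ring.
by rewrite lerD2r mulrC.
Qed.

End young.

Section energy_algebra.
Variable R : realType.
Local Open Scope ereal_scope.

(* [s] stands for [t ^ p] and [r] for [q / p], so that [s + A s ^ r] is [phi_O^-(t)]. *)
Lemma min_mul_le_of_energy_bounds (r s l A : R) (C P Q Phi : \bar R) :
  (0 < r)%R -> (0 < s)%R -> (0 < l)%R -> (0 <= A)%R -> 0 <= C -> 0 <= Q ->
  s%:E * C <= P -> l%:E * (P / l%:E) `^ r <= Q -> P + A%:E * Q <= Phi ->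
  Order.min C (l%:E * (C / l%:E) `^ r) * (s + A * s `^ r)%:E <= Phi.
Proof.
move=> r0 s0 l0 A0 C0 Q0 CP PQ PQPhi.
have s0' : (0 <= s)%R by exact: ltW.
have s0E : 0 <= s%:E by rewrite lee_fin.
have divlE (x : R) : x%:E / l%:E = (x / l)%:E by rewrite /= inver gt_eqF.
have [->|PhiNy] := eqVneq Phi +oo; first exact: leey.
have PPhi : P <= Phi.
  by apply: le_trans PQPhi; rewrite leeDl // mule_ge0 // lee_fin.
case: P => [P| |] in CP PQ PQPhi PPhi *; last first.
- by have := le_trans (mule_ge0 s0E C0) CP.
- by move: PPhi; rewrite leye_eq (negbTE PhiNy).
case: C => [c| |] in C0 CP *; last by []; last first.
  by move: CP; rewrite mulry gtr0_sg // mul1e leye_eq.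
rewrite lee_fin in C0; rewrite -EFinM lee_fin in CP.
have Qge : ((s `^ r * (l * (c / l) `^ r))%:E <= Q).
  apply: le_trans PQ; rewrite divlE poweR_EFin -EFinM lee_fin mulrCA.
  have cl0 : (0 <= c / l)%R by rewrite divr_ge0 // ltW.
  have Pl0 : (0 <= P / l)%R.
    apply: divr_ge0; last exact: ltW.
    by apply: le_trans CP; rewrite mulr_ge0 // ltW.
  have r0' : (0 <= r)%R by exact: ltW.
  rewrite ler_pM2l // -powRM //; apply: ge0_ler_powR; rewrite ?nnegrE //.
    exact: mulr_ge0.
  by rewrite mulrA ler_pM2r // invr_gt0.
apply: le_trans PQPhi.
rewrite divlE poweR_EFin -EFinM -EFin_min -EFinM.
have A0E : 0 <= A%:E by rewrite lee_fin.
apply: le_trans (leeD (lexx _) (lee_wpmul2l A0E Qge)).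
rewrite -EFinM -EFinD lee_fin mulrDr; apply: lerD.
  by apply: le_trans CP; rewrite mulrC ler_wpM2l // ge_min lexx.
rewrite mulrCA ler_wpM2l // mulrC ler_wpM2l ?powR_ge0 //.
by rewrite ge_min lexx orbT.
Qed.

End energy_algebra.

Section gradient.
Variable R : realType.

Lemma enorm_ge0 n (w : 'rV[R]_n) : 0 <= enorm w.
Proof. exact: sqrtr_ge0. Qed.

Lemma enormZ n (c : R) (w : 'rV[R]_n) : enorm (c *: w) = `|c| * enorm w.
Proof.
rewrite /enorm (eq_bigr (fun i => c ^+ 2 * w 0 i ^+ 2)); last first.
  by move=> i _; rewrite mxE exprMn.
by rewrite -mulr_sumr sqrtrM ?sqr_ge0 // sqrtr_sqr.
Qed.

Lemma gradZ n (u : 'rV[R]_n -> R) (c : R) x : c != 0 ->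
  grad (c *: u) x = c *: grad u x.
Proof.
move=> c0; rewrite /grad; have [du|ndu] := pselect (differentiable u x).
  rewrite !asboolT //; last exact: differentiableZ.
  by rewrite diffZ //; apply/rowP => i; rewrite !mxE.
have ndcu : ~ differentiable (c *: u) x.
  move=> dcu; apply: ndu; rewrite -[u](scalerK c0); exact: differentiableZ.
by rewrite !asboolF // scaler0.
Qed.

End gradient.

Lemma inf_image_ge0 (R : realType) (T : Type) (a : T -> R) (O : set T) :
  (forall x, 0 <= a x) -> 0 <= inf (a @` O).
Proof.
move=> a0; have [[x Ox]|nO] := pselect (O !=set0).
  by apply: lb_le_inf => [|_ [y _ <-]]; [exists (a x), x | exact: a0].
by rewrite (_ : O = set0) ?image_set0 ?inf0 //; apply/seteqP; split=> x // Ox; apply: nO; exists x.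
Qed.

Section energy.
Variables (R : realType) (n : nat) (O : set 'rV[R]_n).
Local Open Scope ereal_scope.
Implicit Types (F G : 'rV[R]_n -> R -> R) (u : 'rV[R]_n -> R).

Definition power_energy (e : R) u := energy O (fun _ s => (s `^ e)%R) u.

Lemma energy_ge0 F u : (forall x s, (0 <= s)%R -> (0 <= F x s)%R) -> 0 <= energy O F u.
Proof.
by move=> F0; apply: iint_ge0 => x; case: asboolP; rewrite // lee_fin F0 ?enorm_ge0.
Qed.

Lemma le_energy F G u : (forall x s, (0 <= s)%R -> (0 <= F x s)%R) ->
  (forall x s, O x -> (0 <= s)%R -> (F x s <= G x s)%R) -> energy O F u <= energy O G u.
Proof.
move=> F0 FG; apply: le_iint => x; case: asboolP => // Ox.
  by rewrite lee_fin F0 ?enorm_ge0.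
by rewrite lee_fin FG ?enorm_ge0.
Qed.

Lemma energyD_ge F G u : (forall x s, (0 <= s)%R -> (0 <= F x s)%R) ->
  (forall x s, (0 <= s)%R -> (0 <= G x s)%R) ->
  energy O F u + energy O G u <= energy O (fun x s => F x s + G x s)%R u.
Proof.
move=> F0 G0; apply: le_trans (iintD_ge _ _) _.
- by move=> x; case: asboolP; rewrite // lee_fin F0 ?enorm_ge0.
- by move=> x; case: asboolP; rewrite // lee_fin G0 ?enorm_ge0.
apply: le_iint => x; case: asboolP => _; rewrite ?adde0 //.
by rewrite lee_fin addr_ge0 ?F0 ?G0 ?enorm_ge0.
Qed.

Lemma energyZl_ge F u (k : R) : (forall x s, (0 <= s)%R -> (0 <= F x s)%R) -> (0 <= k)%R ->
  k%:E * energy O F u <= energy O (fun x s => k * F x s)%R u.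
Proof.
move=> F0 k0; apply: le_trans (iintZl_ge _ k0) _.
  by move=> x; case: asboolP; rewrite // lee_fin F0 ?enorm_ge0.
apply: le_iint => x; case: asboolP => _; rewrite ?mule0 //.
by rewrite lee_fin mulr_ge0 ?F0 ?enorm_ge0.
Qed.

Lemma energyDr_le F u (K : R) : open O -> (forall x s, (0 <= s)%R -> (0 <= F x s)%R) ->
  (0 <= K)%R -> energy O (fun x s => F x s + K)%R u <= energy O F u + K%:E * lebn O.
Proof.
move=> oO F0 K0; have f0 x : 0 <= if `[< O x >] then (F x (enorm (grad u x)))%:E else 0.
  by case: asboolP; rewrite // lee_fin F0 ?enorm_ge0.
apply: le_trans (iintD_indic_le oO f0 K0); apply: le_iint => x.
  by case: asboolP; rewrite // lee_fin addr_ge0 ?F0 ?enorm_ge0.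
case: asboolP => Ox; rewrite indicE.
  by rewrite mem_set // mule1 EFinD.
by rewrite memNset // mule0 adde0.
Qed.

Lemma energyZ F (u : 'rV[R]_n -> R) (c : R) : (c != 0)%R ->
  energy O F (c *: u) = energy O (fun x s => F x (`|c| * s)%R) u.
Proof. by move=> c0; congr iint; apply/funext => x; rewrite gradZ // enormZ. Qed.

Lemma power_energy_ge0 e u : 0 <= power_energy e u.
Proof. by apply: energy_ge0 => x s _; exact: powR_ge0. Qed.

End energy.

Section capacity_bounds.
Variables (R : realType) (n : nat) (p q : R) (a : 'rV[R]_n -> R) (O E : set 'rV[R]_n).
Hypotheses (p1 : 1 < p) (pq : p < q) (a0 : forall x, 0 <= a x) (oO : open O).
Local Open Scope ereal_scope.

Let powR_nonneg (e : R) (x : 'rV[R]_n) (s : R) : (0 <= s)%R -> (0 <= s `^ e)%R.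
Proof. by move=> _; exact: powR_ge0. Qed.

Lemma energy_phi_ge u :
  power_energy O p u + (inf (a @` O))%:E * power_energy O q u <= energy O (phi p q a) u.
Proof.
have A0 := inf_image_ge0 O a0; rewrite /power_energy.
have Aq0 (x : 'rV[R]_n) (s : R) : (0 <= s)%R -> (0 <= inf (a @` O) * s `^ q)%R.
  by move=> _; rewrite mulr_ge0 ?powR_ge0.
apply: le_trans (leeD (lexx _) (energyZl_ge _ _ _ A0)) _; first exact: powR_nonneg.
apply: le_trans (energyD_ge O u (powR_nonneg p) Aq0) _.
apply: le_energy => [x s _|x s Ox _]; first by rewrite addr_ge0 ?mulr_ge0 ?powR_ge0.
rewrite /phi lerD2l ler_wpM2r ?powR_ge0 //.
by apply: ge_inf; [exists 0%R => _ [y _ <-]; exact: a0 | exists x].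
Qed.

Lemma admissible_scale t u : (0 < t)%R -> admissible O E t u ->
  admissible O E 1 (t^-1 *: u).
Proof.
move=> t0 [[L uL] u0 uE ub]; have ti0 : (0 < t^-1)%R by rewrite invr_gt0.
have scaleuE x : (t^-1 *: u) x = (t^-1 * u x)%R by [].
split => [|x Ox|x Ex|x Ox nOx] /=.
- exists (t^-1 * L)%R => x y Ox Oy; rewrite -mulrBr normrM gtr0_norm // -mulrA.
  by rewrite ler_wpM2l ?uL // ltW.
- by rewrite mulr_ge0 ?u0 // ltW.
- by rewrite scaleuE mulrC ler_pdivlMr // mul1r uE.
- by rewrite scaleuE ub // mulr0.
Qed.

Lemma cap_p_ge0 : 0 <= cap_p p E O.
Proof. by apply: le_ereal_inf_tmp => _ [u _ <-]; exact: power_energy_ge0. Qed.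

Lemma cap_p_le_power_energy t u : (0 < t)%R -> admissible O E t u ->
  (t `^ p)%:E * cap_p p E O <= power_energy O p u.
Proof.
move=> t0 adu; have tp0 : (0 <= t `^ p)%R by exact: powR_ge0.
have ti0 : (0 < t^-1)%R by rewrite invr_gt0.
apply: le_trans (lee_wpmul2l _ (ereal_inf_lbound _)) _; first by rewrite lee_fin.
  by exists (t^-1 *: u); first exact: admissible_scale.
rewrite energyZ ?invr_eq0 ?gt_eqF // gtr0_norm //.
apply: le_trans (energyZl_ge _ _ _ tp0) _; first by move=> x s _; exact: powR_ge0.
apply: le_energy => x s *; first by rewrite mulr_ge0 ?powR_ge0.
rewrite powRM ?(ltW ti0) // mulrA -powRM ?(ltW t0) ?(ltW ti0) // mulfV ?gt_eqF //.
by rewrite powR1 mul1r.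
Qed.

Lemma young_power_energy u (b : R) : (0 <= b)%R ->
  ((q / p * b)%:E * power_energy O p u <=
   power_energy O q u + ((q / p - 1) * b `^ (q / p / (q / p - 1)))%:E * lebn O).
Proof.
move=> b0; have p0 : (0 < p)%R by apply: lt_trans p1.
have r1 : (1 < q / p)%R by rewrite ltr_pdivlMr // mul1r.
have rb0 : (0 <= q / p * b)%R by rewrite mulr_ge0 // ltW // (lt_trans _ r1).
have K0 : (0 <= (q / p - 1) * b `^ (q / p / (q / p - 1)))%R.
  by rewrite mulr_ge0 ?powR_ge0 // subr_ge0 ltW.
rewrite /power_energy; apply: le_trans (energyZl_ge O u (powR_nonneg p) rb0) _.
apply: le_trans (energyDr_le u oO (powR_nonneg q) K0).
apply: le_energy => [x s s0|x s _ s0]; first by rewrite mulr_ge0 ?powR_ge0.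
rewrite (_ : s `^ q = (s `^ p) `^ (q / p))%R; last by rewrite -powRrM mulrC divfK ?gt_eqF.
by apply: young_powR => //; exact: powR_ge0.
Qed.

Lemma power_energy_mean_le u (l : R) : (0 < l)%R -> lebn O = l%:E ->
  l%:E * (power_energy O p u / l%:E) `^ (q / p) <= power_energy O q u.
Proof.
move=> l0 Ol; have p0 : (0 < p)%R by apply: lt_trans p1.
have r1 : (1 < q / p)%R by rewrite ltr_pdivlMr // mul1r.
have young := young_power_energy u; rewrite Ol in young.
have := power_energy_ge0 O p u; have := power_energy_ge0 O q u.
case: (power_energy O p u) young => [P| |] young Q0 P0.
- case: (power_energy O q u) young Q0 => [Q| |] young Q0; last by [].
  + rewrite /= inver gt_eqF // poweR_EFin -EFinM lee_fin.
    apply: (mean_powR_le_of_young r1 l0) => [|b b0]; first by rewrite -lee_fin.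
    by have := young b b0; rewrite -!EFinM -EFinD lee_fin.
  + exact: leey.
- have := young 1%R ler01; rewrite mulr1 gt0_muley ?lte_fin ?(lt_trans _ r1) //.
  by rewrite leye_eq => /eqP; case: (power_energy O q u) => // _; exact: leey.
- by [].
Qed.

Lemma phi_minus_gt0 t : (0 < t)%R -> (0 < phi_minus p q a O t)%R.
Proof.
move=> t0; rewrite /phi_minus; apply: lt_le_trans (powR_gt0 p t0) _.
by rewrite lerDl mulr_ge0 ?powR_ge0 ?inf_image_ge0.
Qed.

Lemma cap_min_le_energy t u : (0 < t)%R -> admissible O E t u ->
  Order.min (cap_p p E O) (lebn O * (cap_p p E O / lebn O) `^ (q / p)) *
    (phi_minus p q a O t)%:E <= energy O (phi p q a) u.
Proof.
move=> t0 adu; set C := cap_p p E O.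
have p0 : (0 < p)%R by apply: lt_trans p1.
have r0 : (0 < q / p)%R by rewrite divr_gt0 // (lt_trans p0).
have Phi0 : 0 <= energy O (phi p q a) u.
  by apply: energy_ge0 => x s s0; rewrite /phi addr_ge0 ?mulr_ge0 ?powR_ge0.
have min_le0 m : m <= 0 -> m * (phi_minus p q a O t)%:E <= energy O (phi p q a) u.
  by move=> m0; apply: le_trans Phi0; rewrite mule_le0_ge0 // lee_fin ltW // phi_minus_gt0.
have := lebn_ge0 O; case Ol: (lebn O) => [l| |] // l0; last first.
  (* [cap_p / +oo = 0], since [+oo^-1 = 0] in [\bar R]. *)
  by apply: min_le0; rewrite /= mule0 poweR0r ?gt_eqF // mule0 ge_min lexx orbT.
move: l0; rewrite lee_fin le0r => /predU1P[l0|l0].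
  by apply: min_le0; rewrite l0 mul0e ge_min lexx orbT.
rewrite /phi_minus (_ : t `^ q = (t `^ p) `^ (q / p))%R; last first.
  by rewrite -powRrM mulrC divfK ?gt_eqF.
apply: (min_mul_le_of_energy_bounds (P := power_energy O p u) (Q := power_energy O q u)) => //.
- exact: powR_gt0.
- exact: inf_image_ge0.
- exact: cap_p_ge0.
- exact: power_energy_ge0.
- exact: cap_p_le_power_energy.
- exact: power_energy_mean_le.
- exact: energy_phi_ge.
Qed.

End capacity_bounds.

Theorem lemma2p3 (R : realType) (p q : R) :
  1 < p -> p < q ->
  exists c : R, 0 < c /\
  forall (n : nat) (alpha : R) (a : 'rV[R]_n -> R) (O E : set 'rV[R]_n),
    0 < alpha <= 1 ->
    (forall x, 0 <= a x) ->
    holder_continuous alpha a ->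
    open O ->
    (exists M : R, forall x, O x -> enorm x <= M) ->
    compact E ->
    E `<=` O ->
    (cap_inf p q a E O >=
       c%:E * Order.min (cap_p p E O)
                        (lebn O * (cap_p p E O / lebn O) `^ (q / p)))%E.
Proof.
move=> p1 pq; exists 1; split => // n alpha a O E _ a0 _ oO _ _ _.
rewrite mul1e; apply: le_ereal_inf_tmp => _ [t /= t0 <-].
apply: le_ereal_inf_tmp => _ [u adu <-].
rewrite lee_pdivlMr ?phi_minus_gt0 //.
exact: cap_min_le_energy.
Qed.
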